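(* Let $m,n,m',n'$ be nonzero integers with $|m|<|n|$ and $|m'|<|n'|$. Let $\phi:\Upsilon^{(0)}_{m,n}\to \Upsilon^{(0)}_{m',n'}$ be a line-preserving bijection. Then $\phi$ maps $a$-lines onto $a$-lines and $t$-lines onto $t$-lines, and the restriction of $\phi$ to each $t$-line preserves the linear order along $t$-lines. Moreover $|m|=|m'|$ and $|n|=|n'|$.
   Context: $\mathrm{BS}(m,n)=\langle a,t\mid ta^mt^{-1}=a^n\rangle$ and $\Upsilon_{m,n}$ is its Cayley graph with respect to $\{a,t\}$, with vertices identified with group elements; each edge $g\to gs$ ($s\in\{a,t\}$) is oriented from $g$ to $gs$ and labeled $s$. A $t$-line (resp. $a$-line) is the subgraph spanned by a left coset $g\langle t\rangle$ (resp. $g\langle a\rangle$); these are the standard lines. Vertices of a standard line are linearly ordered by the orientation of its edges. A bijection $\phi:\Upsilon^{(0)}_{m,n}\to \Upsilon^{(0)}_{m',n'}$ is line-preserving if for every standard line $\ell$ of $\Upsilon_{m,n}$ there is a standard line $\ell'$ of $\Upsilon_{m',n'}$ with $\phi(\ell^{(0)})=(\ell')^{(0)}$. *)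

(* Baumslag-Solitar groups BS(m,n) = <a,t | t a^m t^-1 = a^n>,
   modelled as words in the generators modulo the congruence generated by the
   group laws and the defining relation (a setoid presentation of the group). *)
From Stdlib Require Import ZArith List.
Import ListNotations.
Open Scope Z_scope.

(* A letter (false, k) stands for a^k, (true, k) stands for t^k.
   A word is the product of its letters from left to right. *)
Definition letter := (bool * Z)%type.
Definition word := list letter.

Definition gen_a : bool := false.
Definition gen_t : bool := true.

Inductive bs_eq (m n : Z) : word -> word -> Prop :=
| bs_refl u : bs_eq m n u u
| bs_sym u v : bs_eq m n u v -> bs_eq m n v u
| bs_trans u v w : bs_eq m n u v -> bs_eq m n v w -> bs_eq m n u w
| bs_cat u u' v v' : bs_eq m n u u' -> bs_eq m n v v' -> bs_eq m n (u ++ v) (u' ++ v')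
| bs_zero b : bs_eq m n [(b, 0)] []
| bs_add b i j : bs_eq m n [(b, i); (b, j)] [(b, i + j)]
| bs_rel : bs_eq m n [(gen_t, 1); (gen_a, m); (gen_t, -1)] [(gen_a, n)].

(* The vertex g s^k on the standard s-line g<s> (s = a if b = false, s = t if
   b = true); k |-> g s^k enumerates that line in the order given by the
   orientation of its edges (g s^k -> g s^(k+1)). *)
Definition line_pt (g : word) (b : bool) (k : Z) : word := g ++ [(b, k)].

Definition well_defined (m n m' n' : Z) (phi : word -> word) : Prop :=
  forall u v, bs_eq m n u v -> bs_eq m' n' (phi u) (phi v).

Definition is_bijection (m n m' n' : Z) (phi : word -> word) : Prop :=
  well_defined m n m' n' phi /\
  (forall u v, bs_eq m' n' (phi u) (phi v) -> bs_eq m n u v) /\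
  (forall w, exists u, bs_eq m' n' (phi u) w).

Definition maps_line_onto (m' n' : Z) (phi : word -> word)
    (g : word) (b : bool) (h : word) (c : bool) : Prop :=
  (forall k, exists l, bs_eq m' n' (phi (line_pt g b k)) (line_pt h c l)) /\
  (forall l, exists k, bs_eq m' n' (phi (line_pt g b k)) (line_pt h c l)).

Definition line_preserving (m n m' n' : Z) (phi : word -> word) : Prop :=
  forall (g : word) (b : bool), exists (h : word) (c : bool),
    maps_line_onto m' n' phi g b h c.

(* The combinatorial input is Britton's lemma in the form: t^-q a^i t^q lies in <a> only if
   n | i (q > 0) or m | i (q < 0); it is proved with an explicit normal form.

   A line-preserving bijection phi sends the two lines through a vertex to lines of different
   kinds, and moving along a line does not change the kind of its image, so phi either
   preserves both kinds or swaps them.  A swap is impossible: in every BS(m,n) the a-lines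
   through 1 and t^k are joined by a second t-line, while for |m|, |n| >= 2 the t-lines through
   z and z a are joined by no a-line other than z<a>; so a swap forces |m'| = 1 and, applied to
   phi^-1, |m| = 1.  Then any two t-lines of BS(m,n) are joined by an a-line, whereas the
   a-lines through 1 and t^-1 a t of BS(m',n') are joined by no t-line.

   When kinds are preserved, phi restricted to a t-line is a bijection k |-> s(k) of Z.  A t-line
   meeting the a-lines of g t^i and g t^j meets those of all heights in between, while, as
   |m'| < |n'|, for a < b < c some t-line meets the a-lines of h t^a and h t^b but not that of
   h t^c.  Hence s has no peak, so s(k) = +-k.  A reversal yields an injection of |n/d| a-lines
   into |m'/d'| ones (d, d' the gcds), and symmetrically for phi^-1, contradicting
   |m/d| < |n/d|.  Finally |n| (resp. |m|) is the number of a-lines reached from a given a-line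
   by t (resp. t^-1), and phi preserves these numbers in both directions. *)

From Stdlib Require Import ZArith List Lia Setoid Morphisms FinFun IndefiniteDescription.
Import ListNotations.
Open Scope Z_scope.

#[global] Instance bs_eq_equivalence (m n : Z) : Equivalence (bs_eq m n).
Proof. split; [exact (bs_refl m n) | exact (bs_sym m n) | exact (bs_trans m n)]. Qed.

#[global] Instance app_bs_eq_proper (m n : Z) :
  Proper (bs_eq m n ==> bs_eq m n ==> bs_eq m n) (@app letter).
Proof. intros u u' Hu v v' Hv. now apply bs_cat. Qed.

(* One-letter words are built at type [letter], so that all appends are at that type:
   setoid rewriting only matches syntactically equal instances. *)
Notation gen_pow b k := (@cons letter (b, k) (@nil letter)).
Notation A k := (gen_pow false k).
Notation T k := (gen_pow true k).

Definition winv (w : word) : word := rev (map (fun c => (fst c, - snd c)) w).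

Fixpoint t_exp (w : word) : Z :=
  match w with
  | [] => 0
  | (b, k) :: w' => (if b then k else 0) + t_exp w'
  end.

Section Group.
Context {m n : Z}.
Local Notation "u ≡ v" := (bs_eq m n u v) (at level 70).

Lemma letter_add b i j : gen_pow b i ++ gen_pow b j ≡ gen_pow b (i + j).
Proof. apply bs_add. Qed.

Lemma letter_cancel b k : gen_pow b k ++ gen_pow b (- k) ≡ [].
Proof. now rewrite letter_add, Z.add_opp_diag_r, bs_zero. Qed.

Lemma letter_cancel' b k : gen_pow b (- k) ++ gen_pow b k ≡ [].
Proof. now rewrite letter_add, Z.add_opp_diag_l, bs_zero. Qed.

Lemma A_add i j : A i ++ A j ≡ A (i + j).
Proof. apply letter_add. Qed.

Lemma T_add i j : T i ++ T j ≡ T (i + j).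
Proof. apply letter_add. Qed.

Lemma A0 : A 0 ≡ [].
Proof. apply bs_zero. Qed.

Lemma T0 : T 0 ≡ [].
Proof. apply bs_zero. Qed.

Lemma T_cancel i : T i ++ T (- i) ≡ [].
Proof. apply letter_cancel. Qed.

Lemma T_cancel' i : T (- i) ++ T i ≡ [].
Proof. apply letter_cancel'. Qed.

Lemma app_winv w : w ++ winv w ≡ [].
Proof.
  induction w as [|[b k] w IH]; [reflexivity|].
  unfold winv; cbn [map rev fst snd]; fold (winv w).
  transitivity (gen_pow b k ++ (w ++ winv w) ++ gen_pow b (- k)).
  - now rewrite !app_assoc.
  - now rewrite IH, letter_cancel.
Qed.

Lemma winv_app w : winv w ++ w ≡ [].
Proof.
  induction w as [|[b k] w IH]; [reflexivity|].
  unfold winv; cbn [map rev fst snd]; fold (winv w).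
  transitivity (winv w ++ (gen_pow b (- k) ++ gen_pow b k) ++ w).
  - now rewrite <- !app_assoc.
  - now rewrite letter_cancel'.
Qed.

Lemma cancel_l u v w : u ++ v ≡ u ++ w -> v ≡ w.
Proof.
  intros H.
  now rewrite <- (app_nil_l v), <- (winv_app u), <- app_assoc, H, app_assoc, winv_app.
Qed.

Lemma cancel_r u v w : v ++ u ≡ w ++ u -> v ≡ w.
Proof.
  intros H.
  now rewrite <- (app_nil_r v), <- (app_winv u), app_assoc, H, <- app_assoc, app_winv,
    app_nil_r.
Qed.

Lemma t_exp_app u v : t_exp (u ++ v) = t_exp u + t_exp v.
Proof. induction u as [|[b k] u IH]; cbn; [reflexivity|]. rewrite IH; lia. Qed.

Lemma t_exp_bs_eq u v : u ≡ v -> t_exp u = t_exp v.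
Proof.
  induction 1; cbn; rewrite ?t_exp_app; try destruct b; cbn; lia.
Qed.

Lemma t_exp_T g k : t_exp (g ++ T k) = t_exp g + k.
Proof. rewrite t_exp_app; cbn; ring. Qed.

Lemma T_inj i j : T i ≡ T j -> i = j.
Proof. intros H. apply t_exp_bs_eq in H. cbn in H. lia. Qed.

Lemma defining_relation : T 1 ++ A m ++ T (-1) ≡ A n.
Proof. apply bs_rel. Qed.

Lemma conj_T1_add i j :
  T 1 ++ A (i + j) ++ T (-1) ≡ (T 1 ++ A i ++ T (-1)) ++ (T 1 ++ A j ++ T (-1)).
Proof.
  rewrite <- A_add, <- !app_assoc, (app_assoc (T (-1))), (T_cancel' 1).
  reflexivity.
Qed.

Lemma conj_T1_A x : T 1 ++ A (m * x) ++ T (-1) ≡ A (n * x).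
Proof.
  induction x as [|x IH|x IH] using Z.peano_ind.
  - now rewrite !Z.mul_0_r, A0, T_cancel.
  - rewrite Z.mul_succ_r, conj_T1_add, IH, defining_relation, A_add, Z.mul_succ_r. reflexivity.
  - apply (cancel_r (A n)).
    rewrite <- defining_relation at 1.
    rewrite <- conj_T1_add, A_add, <- !Z.mul_succ_r, Z.succ_pred.
    exact IH.
Qed.

Lemma A_T1 x : A (n * x) ++ T 1 ≡ T 1 ++ A (m * x).
Proof. now rewrite <- conj_T1_A, <- !app_assoc, (T_cancel' 1), app_nil_r. Qed.

Lemma A_Tinv1 x : A (m * x) ++ T (-1) ≡ T (-1) ++ A (n * x).
Proof. now rewrite <- conj_T1_A, !app_assoc, (T_cancel' 1). Qed.

Lemma conj_T_pow g u w k v :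
  m = g * u -> n = g * w -> 0 <= k ->
  T k ++ A (g * u ^ k * v) ++ T (- k) ≡ A (g * w ^ k * v).
Proof.
  intros Hu Hw Hk. revert v. pattern k.
  apply natlike_ind; [| clear k Hk; intros k Hk0 IH | exact Hk]; intros v.
  - change (- 0) with 0. now rewrite Z.pow_0_r, !Z.mul_1_r, T0, app_nil_r.
  - rewrite !Z.pow_succ_r by exact Hk0.
    replace (- Z.succ k) with (-1 + - k) by lia.
    rewrite <- Z.add_1_r, <- !T_add, <- !app_assoc.
    replace (g * (u * u ^ k) * v) with (m * (u ^ k * v)) by (subst; ring).
    rewrite (app_assoc (A _)), (app_assoc (T 1)), conj_T1_A.
    replace (n * (u ^ k * v)) with (g * u ^ k * (w * v)) by (subst; ring).
    replace (g * (w * w ^ k) * v) with (g * w ^ k * (w * v)) by ring.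
    apply IH.
Qed.

Lemma A_T_pow k v : 0 <= k -> A (n ^ k * v) ++ T k ≡ T k ++ A (m ^ k * v).
Proof.
  intros Hk.
  rewrite <- (Z.mul_1_l (n ^ k)), <- (conj_T_pow 1 m n k v) by (ring || exact Hk).
  now rewrite <- !app_assoc, T_cancel', app_nil_r, Z.mul_1_l.
Qed.

Lemma A_Tinv_pow k v : 0 <= k -> A (m ^ k * v) ++ T (- k) ≡ T (- k) ++ A (n ^ k * v).
Proof.
  intros Hk.
  rewrite <- (Z.mul_1_l (n ^ k)), <- (conj_T_pow 1 m n k v) by (ring || exact Hk).
  now rewrite !app_assoc, T_cancel', Z.mul_1_l.
Qed.

End Group.

(* In a normal form (l, e), (r, true) stands for a^r t and (r, false) for a^r t^-1, and the
   pair for the product of the letters of l followed by a^e.  It is [reduced] when residues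
   are taken mod n before t and mod m before t^-1 and no t a^0 t^-1 or t^-1 a^0 t occurs. *)
Definition nf : Type := (list (Z * bool) * Z)%type.

Section NormalForms.
Variables m n : Z.
Hypotheses (Hm : m <> 0) (Hn : n <> 0).

Definition modulus (b : bool) : Z := if b then n else m.
Definition comodulus (b : bool) : Z := if b then m else n.

Lemma modulus_neq0 b : modulus b <> 0.
Proof. now destruct b. Qed.

(* a^j a^r t = a^((r + j) mod n) t a^(m ((r + j) / n)), as a^n t = t a^m; dually before t^-1. *)
Fixpoint carry (j : Z) (l : list (Z * bool)) (e : Z) : nf :=
  match l with
  | [] => ([], e + j)
  | (r, b) :: l' =>
      let p := carry (comodulus b * ((r + j) / modulus b)) l' e in
      (((r + j) mod modulus b, b) :: fst p, snd p)
  end.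

Definition nf_a (j : Z) (x : nf) : nf := carry j (fst x) (snd x).

Definition nf_t (b : bool) (x : nf) : nf :=
  match fst x with
  | (Z0, b') :: l => if Bool.eqb b b' then ((0, b) :: fst x, snd x) else (l, snd x)
  | l => ((0, b) :: l, snd x)
  end.

Fixpoint reduced (l : list (Z * bool)) : Prop :=
  match l with
  | [] => True
  | (r, b) :: l' =>
      r mod modulus b = r /\
      match l' with [] => True | (r', b') :: _ => b' <> b -> r' <> 0 end /\
      reduced l'
  end.

Lemma carry_add l i j e :
  carry i (fst (carry j l e)) (snd (carry j l e)) = carry (i + j) l e.
Proof.
  revert i j. induction l as [|[r b] l IH]; intros i j; cbn.
  - f_equal; lia.
  - rewrite IH.
    pose proof (modulus_neq0 b) as HM.
    set (M := modulus b) in *.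
    assert (Emod : ((r + j) mod M + i) mod M = (r + (i + j)) mod M).
    { rewrite Z.add_mod_idemp_l by exact HM. f_equal; lia. }
    assert (Ediv : (r + (i + j)) / M = (r + j) / M + ((r + j) mod M + i) / M).
    { replace (r + (i + j)) with ((r + j) / M * M + ((r + j) mod M + i))
        by (pose proof (Z.div_mod (r + j) M HM); lia).
      now rewrite Z.div_add_l by exact HM. }
    rewrite Emod, Ediv, Z.mul_add_distr_l, (Z.add_comm (comodulus b * _)).
    reflexivity.
Qed.

Lemma div_eq0_of_mod_id r M : M <> 0 -> r mod M = r -> r / M = 0.
Proof.
  intros HM Hr. pose proof (Z.div_mod r M HM) as E. rewrite Hr in E.
  destruct (Z.mul_eq_0 M (r / M)) as [H _]. destruct H; [lia | contradiction | assumption].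
Qed.

Lemma carry0 l e : reduced l -> carry 0 l e = (l, e).
Proof.
  revert e. induction l as [|[r b] l IH]; intros e Hl; cbn.
  - f_equal; lia.
  - destruct Hl as [Hr [_ Hl]].
    rewrite Z.add_0_r, Hr, (div_eq0_of_mod_id r _ (modulus_neq0 b) Hr), Z.mul_0_r, IH
      by exact Hl.
    reflexivity.
Qed.

Lemma carry_reduced l j e : reduced l -> reduced (fst (carry j l e)).
Proof.
  revert j. induction l as [|[r b] l IH]; intros j Hl; [exact I|].
  destruct Hl as [Hr [Hpinch Hl]]. cbn.
  split; [apply Z.mod_mod, modulus_neq0|]. split; [|now apply IH].
  destruct l as [|[r' b'] l]; [exact I|].
  cbn. intros Hb. destruct Hl as [Hr' _].
  destruct b, b'; try congruence; cbn in *;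
    rewrite Z.mul_comm, Z_mod_plus_full, Hr'; auto.
Qed.

Lemma nf_a_add i j x : nf_a i (nf_a j x) = nf_a (i + j) x.
Proof. apply carry_add. Qed.

Lemma nf_a0 x : reduced (fst x) -> nf_a 0 x = x.
Proof. destruct x; apply carry0. Qed.

Lemma nf_a_reduced j x : reduced (fst x) -> reduced (fst (nf_a j x)).
Proof. apply carry_reduced. Qed.

Lemma nf_t_reduced b x : reduced (fst x) -> reduced (fst (nf_t b x)).
Proof.
  destruct x as [[|[r c] l] e]; cbn; intros Hl.
  - now repeat split.
  - destruct r; [destruct b, c|..]; cbn in *; try tauto;
      repeat split; try tauto; congruence.
Qed.

Lemma nf_t_cancel b x : reduced (fst x) -> nf_t b (nf_t (negb b) x) = x.
Proof.
  destruct x as [[|[r c] l] e]; cbn; intros Hl; [now destruct b|].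
  destruct r; [|now destruct b..].
  destruct b, c; cbn; try reflexivity;
    destruct l as [|[[|r'|r'] c'] l]; cbn; try reflexivity;
    destruct Hl as [_ [Hpinch _]]; destruct c'; try reflexivity;
    exfalso; now apply Hpinch.
Qed.

Definition nf_tpow (k : Z) (x : nf) : nf := Nat.iter (Z.abs_nat k) (nf_t (0 <=? k)) x.

Lemma iter_nf_t_reduced b p x : reduced (fst x) -> reduced (fst (Nat.iter p (nf_t b) x)).
Proof. intros Hx. induction p; [exact Hx|]. now apply nf_t_reduced. Qed.

Lemma nf_tpow_reduced k x : reduced (fst x) -> reduced (fst (nf_tpow k x)).
Proof. apply iter_nf_t_reduced. Qed.

Lemma nf_tpow_succ k x : reduced (fst x) -> nf_tpow (k + 1) x = nf_t true (nf_tpow k x).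
Proof.
  intros Hx. unfold nf_tpow.
  destruct (Z_lt_le_dec k (-1)) as [Hk | Hk].
  - replace (Z.abs_nat k) with (S (Z.abs_nat (k + 1))) by lia.
    replace (0 <=? k) with false by lia. replace (0 <=? k + 1) with false by lia.
    rewrite Nat.iter_succ. symmetry. apply (nf_t_cancel true).
    now apply iter_nf_t_reduced.
  - destruct (Z.eq_dec k (-1)) as [->|Hk'].
    + symmetry. now apply (nf_t_cancel true).
    + replace (Z.abs_nat (k + 1)) with (S (Z.abs_nat k)) by lia.
      replace (0 <=? k) with true by lia. now replace (0 <=? k + 1) with true by lia.
Qed.

Lemma nf_tpow_add i j x : reduced (fst x) -> nf_tpow (i + j) x = nf_tpow i (nf_tpow j x).
Proof.
  intros Hx. induction i as [|i IH|i IH] using Z.peano_ind.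
  - reflexivity.
  - rewrite <- !Z.add_1_r, Z.add_shuffle0, !nf_tpow_succ, IH;
      auto using nf_tpow_reduced.
  - assert (Hpred : forall k y,
      reduced (fst y) -> nf_tpow (Z.pred k) y = nf_t false (nf_tpow k y)).
    { intros k y Hy. rewrite <- (nf_t_cancel false (nf_tpow (Z.pred k) y))
        by now apply nf_tpow_reduced.
      cbn [negb]. rewrite <- nf_tpow_succ by exact Hy. now rewrite Z.add_1_r, Z.succ_pred. }
    rewrite Z.add_pred_l, !Hpred, IH; auto using nf_tpow_reduced.
Qed.

Lemma nf_relation x :
  reduced (fst x) -> nf_t true (nf_a m (nf_t false x)) = nf_a n x.
Proof.
  destruct x as [l e]; intros Hl.
  assert (Hmm : m mod m = 0) by apply Z_mod_same_full.
  assert (Hnn : n mod n = 0) by apply Z_mod_same_full.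
  pose proof (Z.div_same m Hm) as Dm; pose proof (Z.div_same n Hn) as Dn.
  destruct l as [|[[|r|r] [|]] l]; cbn; rewrite ?Hmm, ?Hnn, ?Dm, ?Dn, ?Z.mul_1_r;
    try reflexivity.
  destruct Hl as [_ [Hpinch Hl]].
  destruct l as [|[r' [|]] l]; cbn; [reflexivity | now destruct ((r' + m) mod n) |].
  destruct Hl as [Hr' _]; cbn in Hr'.
  replace (r' + m) with (r' + 1 * m) by ring.
  rewrite Z_mod_plus_full, Hr'.
  destruct r'; [exfalso; now apply Hpinch | reflexivity..].
Qed.

Definition nf_letter (c : letter) (x : nf) : nf :=
  if fst c then nf_tpow (snd c) x else nf_a (snd c) x.

Definition nf_act (w : word) (x : nf) : nf := fold_right nf_letter x w.

Lemma nf_act_app u v x : nf_act (u ++ v) x = nf_act u (nf_act v x).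
Proof. apply fold_right_app. Qed.

Lemma nf_act_reduced w x : reduced (fst x) -> reduced (fst (nf_act w x)).
Proof.
  intros Hx. induction w as [|[[|] k] w IH]; cbn;
    auto using nf_tpow_reduced, nf_a_reduced.
Qed.

Lemma nf_act_bs_eq u v :
  bs_eq m n u v -> forall x, reduced (fst x) -> nf_act u x = nf_act v x.
Proof.
  induction 1 as [| | | u u' v v' _ IHu _ IHv | [|] | [|] i j |]; intros x Hx.
  - reflexivity.
  - symmetry; auto.
  - transitivity (nf_act v x); auto.
  - rewrite !nf_act_app, IHv by exact Hx. apply IHu, nf_act_reduced, Hx.
  - reflexivity.
  - now apply nf_a0.
  - symmetry; now apply nf_tpow_add.
  - apply nf_a_add.
  - exact (nf_relation x Hx).
Qed.

End NormalForms.

Section NormalFormConsequences.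
Context {m n : Z}.
Hypotheses (Hm : m <> 0) (Hn : n <> 0).
Local Notation "u ≡ v" := (bs_eq m n u v) (at level 70).

Lemma A_inj i j : A i ≡ A j -> i = j.
Proof.
  intros H. apply (nf_act_bs_eq m n Hm Hn _ _) with (x := ([], 0)) in H; [|exact I].
  cbn in H. injection H. lia.
Qed.

Lemma iter_nf_t_nil b p : Nat.iter p (nf_t b) ([], 0) = (repeat (0, b) p, 0).
Proof.
  induction p as [|p IH]; [reflexivity|].
  rewrite Nat.iter_succ. rewrite IH. destruct p; unfold nf_t; cbn; now rewrite ?Bool.eqb_reflx.
Qed.

Definition head_avoids (c : Z * bool) (x : nf) : Prop :=
  match fst x with [] => False | c' :: _ => c' <> c end.

Lemma iter_nf_t_head_avoids b p x :
  head_avoids (0, negb b) x -> head_avoids (0, negb b) (Nat.iter p (nf_t b) x).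
Proof.
  intros Hx. induction p as [|p IH]; [exact Hx|].
  rewrite Nat.iter_succ. revert IH. generalize (Nat.iter p (nf_t b) x) as y.
  intros [[|[[|r|r] c] l] e] Hy; cbn in *; try contradiction;
    try (destruct b; cbn; congruence).
  destruct b, c; cbn in *; congruence.
Qed.

Lemma britton_divides q i j :
  q <> 0 -> T (- q) ++ A i ++ T q ≡ A j -> (modulus m n (0 <=? q) | i).
Proof.
  intros Hq H. apply (nf_act_bs_eq m n Hm Hn _ _) with (x := ([], 0)) in H; [|exact I].
  apply Z.mod_divide; [apply modulus_neq0; assumption|].
  destruct (Z.eq_dec (i mod modulus m n (0 <=? q)) 0) as [|Hi]; [assumption|exfalso].
  unfold nf_act in H; cbn [fold_right app nf_letter fst snd] in H.
  change (nf_tpow q ([], 0)) with (Nat.iter (Z.abs_nat q) (nf_t (0 <=? q)) ([], 0)) in H.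
  rewrite iter_nf_t_nil in H.
  unfold nf_tpow in H. replace (Z.abs_nat (- q)) with (Z.abs_nat q) in H by lia.
  replace (0 <=? - q) with (negb (0 <=? q)) in H by lia.
  destruct (Z.abs_nat q) as [|p] eqn:Ep; [lia|].
  match type of H with Nat.iter _ _ ?x = _ =>
    assert (Hx : head_avoids (0, negb (negb (0 <=? q))) x) end.
  { rewrite Bool.negb_involutive. cbn. congruence. }
  apply (iter_nf_t_head_avoids _ (S p)) in Hx. now rewrite H in Hx.
Qed.

Lemma britton_pos q i j : 0 < q -> T (- q) ++ A i ++ T q ≡ A j -> (n | i).
Proof.
  intros Hq H. apply britton_divides in H; [|lia].
  now replace (0 <=? q) with true in H by lia.
Qed.

Lemma britton_neg q i j : q < 0 -> T (- q) ++ A i ++ T q ≡ A j -> (m | i).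
Proof.
  intros Hq H. apply britton_divides in H; [|lia].
  now replace (0 <=? q) with false in H by lia.
Qed.

End NormalFormConsequences.

Definition on_line (m n : Z) (x g : word) (b : bool) : Prop :=
  exists k, bs_eq m n x (g ++ gen_pow b k).

#[global] Instance on_line_proper (m n : Z) :
  Proper (bs_eq m n ==> bs_eq m n ==> eq ==> iff) (on_line m n).
Proof.
  intros x x' Hx g g' Hg b _ <-. unfold on_line.
  now setoid_rewrite Hx; setoid_rewrite Hg.
Qed.

Section Lines.
Context {m n : Z}.
Hypotheses (Hm : m <> 0) (Hn : n <> 0).
Local Notation "u ≡ v" := (bs_eq m n u v) (at level 70).
Local Notation on := (on_line m n).

Lemma on_line_pt g b k : on (g ++ gen_pow b k) g b.
Proof. now exists k. Qed.

Lemma on_line_refl g b : on g g b.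
Proof. exists 0. now rewrite bs_zero, app_nil_r. Qed.

Lemma on_line_trans x y g b : on x g b -> on y x b -> on y g b.
Proof.
  intros [k Hk] [l Hl]. exists (k + l).
  now rewrite Hl, Hk, <- app_assoc, letter_add.
Qed.

Lemma on_line_sym x g b : on x g b -> on g x b.
Proof.
  intros [k Hk]. exists (- k).
  now rewrite Hk, <- app_assoc, letter_cancel, app_nil_r.
Qed.

Lemma on_line_shared x y g b : on x g b -> on y g b -> on y x b.
Proof. intros Hx Hy. apply on_line_trans with g; [now apply on_line_sym | exact Hy]. Qed.

Lemma A_on_t_line x k : on (x ++ A k) x true -> k = 0.
Proof.
  intros [l Hl]. apply cancel_l in Hl.
  assert (l = 0) as ->.
  { apply t_exp_bs_eq in Hl. cbn in Hl. lia. }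
  rewrite bs_zero in Hl. apply (A_inj Hm Hn). now rewrite Hl, A0.
Qed.

Lemma a_line_t_line_meet_once x y g h :
  on x g false -> on x h true -> on y g false -> on y h true -> x ≡ y.
Proof.
  intros Hxg Hxh Hyg Hyh.
  destruct (on_line_shared _ _ _ _ Hxg Hyg) as [i Hi].
  pose proof (on_line_shared _ _ _ _ Hxh Hyh) as Hyx.
  rewrite Hi in Hyx. apply A_on_t_line in Hyx. subst i.
  rewrite Hi. now rewrite bs_zero, app_nil_r.
Qed.

Lemma letter_nontrivial b : ~ gen_pow b 1 ≡ [].
Proof.
  intros H. destruct b.
  - apply t_exp_bs_eq in H. cbn in H. lia.
  - enough (1 = 0) by lia. apply (A_inj Hm Hn). now rewrite A0.
Qed.

Lemma line_kind_unique h1 c1 h2 c2 : (forall x, on x h1 c1 <-> on x h2 c2) -> c1 = c2.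
Proof.
  intros H. destruct (Bool.bool_dec c1 c2) as [|Hc]; [assumption|exfalso].
  apply (letter_nontrivial c1), (cancel_l h1). rewrite app_nil_r.
  assert (H0 : on h1 h2 c2) by apply H, on_line_refl.
  assert (H1 : on (h1 ++ gen_pow c1 1) h2 c2) by apply H, on_line_pt.
  pose proof (on_line_refl h1 c1) as H0'. pose proof (on_line_pt h1 c1 1) as H1'.
  destruct c1, c2; try congruence.
  - exact (a_line_t_line_meet_once _ _ _ _ H1 H1' H0 H0').
  - exact (a_line_t_line_meet_once _ _ _ _ H1' H1 H0' H0).
Qed.

Lemma t_exp_on_a_line x g : on x g false -> t_exp x = t_exp g.
Proof. intros [k Hk]. apply t_exp_bs_eq in Hk. rewrite t_exp_app in Hk. cbn in Hk. lia. Qed.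

End Lines.

Section Geometry.
Context {m n : Z}.
Hypotheses (Hm : m <> 0) (Hn : n <> 0).
Local Notation "u ≡ v" := (bs_eq m n u v) (at level 70).
Local Notation on := (on_line m n).

Lemma on_a_line_T_iff x i q :
  on (x ++ A i ++ T q) (x ++ T q) false <-> exists s, T (- q) ++ A i ++ T q ≡ A s.
Proof.
  unfold on_line. split; intros [s Hs]; exists s.
  - rewrite <- app_assoc in Hs. apply cancel_l in Hs.
    now rewrite Hs, app_assoc, T_cancel'.
  - transitivity (x ++ T q ++ (T (- q) ++ A i ++ T q)).
    + now rewrite (app_assoc (T q)), T_cancel.
    + now rewrite Hs, app_assoc.
Qed.

Lemma on_a_line_A_T_iff x i i' q :
  on (x ++ A i ++ T q) (x ++ A i' ++ T q) false <->
  exists s, T (- q) ++ A (i - i') ++ T q ≡ A s.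
Proof.
  rewrite <- (on_a_line_T_iff (x ++ A i')), <- !app_assoc, (app_assoc (A i')), A_add.
  now replace (i' + (i - i')) with i by ring.
Qed.

Lemma t_lines_reconverge z k :
  k <> 0 -> exists c, c <> 0 /\ on (z ++ A c ++ T k) (z ++ T k) false.
Proof.
  intros Hk. destruct (Z_le_gt_dec 0 k) as [Hk0|Hk0].
  - exists (n ^ k * 1). split; [rewrite Z.mul_1_r; now apply Z.pow_nonzero|].
    exists (m ^ k * 1). now rewrite A_T_pow, app_assoc.
  - exists (m ^ (- k) * 1). split; [rewrite Z.mul_1_r; apply Z.pow_nonzero; lia|].
    exists (n ^ (- k) * 1).
    pose proof (@A_Tinv_pow m n (- k) 1) as H. rewrite Z.opp_involutive in H.
    now rewrite H, app_assoc by lia.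
Qed.

Lemma adjacent_t_lines_meet_at_base x y z :
  2 <= Z.abs m -> 2 <= Z.abs n ->
  on x z true -> on y (z ++ A 1) true -> on y x false -> on x z false.
Proof.
  intros H2m H2n [q Hq] [s Hs] [r Hr].
  assert (H : z ++ A 1 ++ T s ≡ z ++ T q ++ A r).
  { now rewrite app_assoc, <- Hs, Hr, Hq, <- app_assoc. }
  assert (s = q) as ->.
  { apply t_exp_bs_eq in H. rewrite !t_exp_app in H. cbn in H. lia. }
  rewrite (app_assoc z (T q)) in H.
  destruct (proj1 (on_a_line_T_iff z 1 q)) as [s Hs']; [now exists r|].
  destruct (Z.lt_trichotomy q 0) as [Hq0|[->|Hq0]].
  - apply (britton_neg Hm Hn) in Hs'; [|exact Hq0].
    apply Z.divide_1_r in Hs'. lia.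
  - rewrite Hq, T0, app_nil_r. apply on_line_refl.
  - apply (britton_pos Hm Hn) in Hs'; [|exact Hq0].
    apply Z.divide_1_r in Hs'. lia.
Qed.

Lemma a_lines_not_t_joined x y :
  2 <= Z.abs n ->
  on x [] false -> on y (T (-1) ++ A 1 ++ T 1) false -> ~ on y x true.
Proof.
  intros H2n [i Hi] [j Hj] [k Hk].
  assert (H : (T (-1) ++ A 1 ++ T 1) ++ A j ≡ A i ++ T k) by now rewrite <- Hj, Hk, Hi.
  assert (k = 0) as ->.
  { apply t_exp_bs_eq in H. rewrite !t_exp_app in H. cbn in H. lia. }
  rewrite T0, app_nil_r in H.
  assert (H' : T (-1) ++ A 1 ++ T 1 ≡ A (i - j)).
  { apply (cancel_r (A j)). now rewrite H, A_add, Z.sub_add. }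
  apply (britton_pos Hm Hn 1) in H'; [|lia].
  apply Z.divide_1_r in H'. lia.
Qed.

Lemma unit_m_conj p k :
  m * m = 1 -> 0 <= p -> T p ++ A k ++ T (- p) ≡ A (n ^ p * (m ^ p * k)).
Proof.
  intros Hmm Hp.
  pose proof (@conj_T_pow m n 1 m n p (m ^ p * k)) as H.
  rewrite !Z.mul_1_l, Z.mul_assoc, <- Z.pow_mul_l, Hmm, Z.pow_1_l, Z.mul_1_l in H
    by exact Hp.
  now apply H.
Qed.

Lemma unit_m_decomposition w : m * m = 1 -> exists i k j, w ≡ T i ++ A k ++ T j.
Proof.
  intros Hmm. induction w as [|[[|] c] w IH].
  - exists 0, 0, 0. now rewrite T0, A0.
  - destruct IH as (i & k & j & Hw). exists (c + i), k, j.
    change ((true, c) :: w) with (T c ++ w).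
    now rewrite Hw, app_assoc, T_add.
  - destruct IH as (i & k & j & Hw).
    change ((false, c) :: w) with (A c ++ w). setoid_rewrite Hw.
    destruct (Z_le_gt_dec i 0) as [Hi|Hi].
    + exists i, (n ^ (- i) * (m ^ (- i) * c) + k), j.
      rewrite <- A_add, <- (unit_m_conj (- i) c Hmm) by lia.
      rewrite Z.opp_involutive, <- !app_assoc, (app_assoc (T i) (T (- i))), T_cancel.
      reflexivity.
    + exists 0, (c + n ^ i * (m ^ i * k)), (i + j).
      rewrite <- A_add, <- (unit_m_conj i k Hmm), T0, <- T_add by lia.
      rewrite <- !app_assoc, (app_assoc (T (- i))), T_cancel'.
      reflexivity.
Qed.

Lemma t_lines_a_joined u1 u2 :
  m * m = 1 -> exists x y, on x u1 true /\ on y u2 true /\ on y x false.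
Proof.
  intros Hmm. destruct (unit_m_decomposition (winv u1 ++ u2) Hmm) as (i & k & j & H).
  exists (u1 ++ T i), (u2 ++ T (- j)).
  split; [apply on_line_pt|]. split; [apply on_line_pt|]. exists k.
  assert (Hu2 : u2 ≡ u1 ++ T i ++ A k ++ T j).
  { now rewrite <- H, app_assoc, app_winv. }
  now rewrite Hu2, <- !app_assoc, T_cancel, app_nil_r.
Qed.

Lemma app_T_split g i j : g ++ T j ≡ (g ++ T i) ++ T (j - i).
Proof. rewrite <- app_assoc, T_add. now replace (i + (j - i)) with j by ring. Qed.

Lemma conj_T_step q c :
  T (- (q + 1)) ++ A (n * c) ++ T (q + 1) ≡ T (- q) ++ A (m * c) ++ T q.
Proof.
  replace (- (q + 1)) with (- q + -1) by ring. rewrite (Z.add_comm q 1).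
  rewrite <- !T_add, <- !app_assoc, (app_assoc (A (n * c))), A_T1, <- !app_assoc,
    (app_assoc (T (-1))), (T_cancel' 1).
  reflexivity.
Qed.

Lemma britton_prefix k l i s :
  0 <= l <= k -> T (- k) ++ A i ++ T k ≡ A s -> exists s', T (- l) ++ A i ++ T l ≡ A s'.
Proof.
  intros [Hl Hlk]. assert (Hk : 0 <= k) by lia. revert l i s Hl Hlk. pattern k.
  apply natlike_ind; [| clear k Hk; intros k Hk IH l i s Hl Hlk H | exact Hk].
  - intros l i s Hl Hl0 H. replace l with 0 by lia. now exists s.
  - destruct (britton_pos Hm Hn (Z.succ k) i s ltac:(lia) H) as [c ->].
    rewrite (Z.mul_comm c n) in *. rewrite <- Z.add_1_r, conj_T_step in H.
    destruct (Z.eq_dec l 0) as [->|Hl0].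
    + exists (n * c). change (- 0) with 0. now rewrite T0, app_nil_r.
    + destruct (IH (l - 1) (m * c) s ltac:(lia) ltac:(lia) H) as [s' Hs'].
      exists s'. rewrite <- Hs', <- conj_T_step. now replace (l - 1 + 1) with l by ring.
Qed.

Lemma a_line_between_lt g x i l j :
  i < l < j -> on x (g ++ T i) false -> on (x ++ T (j - i)) (g ++ T j) false ->
  on (x ++ T (l - i)) (g ++ T l) false.
Proof.
  intros Hl [s1 Hx] Hj.
  rewrite Hx, (app_T_split g i j), <- app_assoc in Hj.
  apply on_a_line_T_iff in Hj as [s Hs].
  destruct (britton_prefix (j - i) (l - i) s1 s ltac:(lia) Hs) as [s' Hs'].
  rewrite Hx, (app_T_split g i l), <- app_assoc.
  apply on_a_line_T_iff. now exists s'.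
Qed.

Lemma a_line_between g x i l j :
  i < l < j \/ j < l < i -> on x (g ++ T i) false -> on (x ++ T (j - i)) (g ++ T j) false ->
  on (x ++ T (l - i)) (g ++ T l) false.
Proof.
  intros [Hl|Hl] Hi Hj; [exact (a_line_between_lt g x i l j Hl Hi Hj)|].
  assert (Hback : (x ++ T (j - i)) ++ T (i - j) ≡ x).
  { rewrite <- app_assoc, T_add. replace (j - i + (i - j)) with 0 by ring.
    now rewrite T0, app_nil_r. }
  assert (Hshift : (x ++ T (j - i)) ++ T (l - j) ≡ x ++ T (l - i)).
  { rewrite <- app_assoc, T_add. now replace (j - i + (l - j)) with (l - i) by ring. }
  rewrite <- Hshift. apply (a_line_between_lt g _ j l i Hl Hj). now rewrite Hback.
Qed.

End Geometry.

Definition mred (m n : Z) : Z := m / Z.gcd m n.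
Definition nred (m n : Z) : Z := n / Z.gcd m n.

Lemma divide_small_eq0 w d : (w | d) -> Z.abs d < Z.abs w -> d = 0.
Proof.
  intros Hd Hlt. destruct (Z.eq_dec d 0) as [|Hd0]; [assumption|exfalso].
  apply Z.divide_abs_l, Z.divide_abs_r, Z.divide_pos_le in Hd; lia.
Qed.

Lemma divide_sub_mod_abs d c : d <> 0 -> (d | c - c mod Z.abs d).
Proof.
  intros Hd. apply Z.divide_abs_l. exists (c / Z.abs d).
  rewrite Z.mod_eq by lia. ring.
Qed.

Section GcdParts.
Variables m n : Z.
Hypotheses (Hm : m <> 0) (Hn : n <> 0).

Lemma gcd_pos : 0 < Z.gcd m n.
Proof.
  pose proof (Z.gcd_nonneg m n). enough (Z.gcd m n <> 0) by lia.
  intros H0. apply Z.gcd_eq_0 in H0. lia.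
Qed.

Lemma m_eq_gcd_mred : m = Z.gcd m n * mred m n.
Proof.
  pose proof gcd_pos. apply Z.div_exact; [lia|].
  apply Z.mod_divide; [lia | apply Z.gcd_divide_l].
Qed.

Lemma n_eq_gcd_nred : n = Z.gcd m n * nred m n.
Proof.
  pose proof gcd_pos. apply Z.div_exact; [lia|].
  apply Z.mod_divide; [lia | apply Z.gcd_divide_r].
Qed.

Lemma nred_mred_coprime : Z.gcd (nred m n) (mred m n) = 1.
Proof. rewrite Z.gcd_comm. apply Z.gcd_div_gcd; [pose proof gcd_pos; lia | reflexivity]. Qed.

Lemma mred_neq0 : mred m n <> 0.
Proof.
  intros H0. pose proof m_eq_gcd_mred as E. rewrite H0, Z.mul_0_r in E. contradiction.
Qed.

Lemma abs_m_eq : Z.abs m = Z.gcd m n * Z.abs (mred m n).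
Proof.
  pose proof gcd_pos. rewrite m_eq_gcd_mred at 1.
  now rewrite Z.abs_mul, (Z.abs_eq (Z.gcd m n)) by lia.
Qed.

Lemma abs_n_eq : Z.abs n = Z.gcd m n * Z.abs (nred m n).
Proof.
  pose proof gcd_pos. rewrite n_eq_gcd_nred at 1.
  now rewrite Z.abs_mul, (Z.abs_eq (Z.gcd m n)) by lia.
Qed.

Lemma abs_mred_lt_nred : Z.abs m < Z.abs n -> Z.abs (mred m n) < Z.abs (nred m n).
Proof. rewrite abs_m_eq, abs_n_eq. pose proof gcd_pos. nia. Qed.

Lemma divide_m_mul_iff d : (n | m * d) <-> (nred m n | d).
Proof.
  pose proof gcd_pos as Hg. pose proof m_eq_gcd_mred as Em. pose proof n_eq_gcd_nred as En.
  pose proof nred_mred_coprime as Hc.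
  set (g := Z.gcd m n) in *. set (u := mred m n) in *. set (w := nred m n) in *.
  clearbody g u w. rewrite Em, En, <- Z.mul_assoc, Z.mul_divide_cancel_l by lia.
  split; [intros Hd; now apply Z.gauss with u | now apply Z.divide_mul_r].
Qed.

Lemma divide_n_mul_iff d : (m | n * d) <-> (mred m n | d).
Proof.
  pose proof gcd_pos as Hg. pose proof m_eq_gcd_mred as Em. pose proof n_eq_gcd_nred as En.
  pose proof nred_mred_coprime as Hc. rewrite Z.gcd_comm in Hc.
  set (g := Z.gcd m n) in *. set (u := mred m n) in *. set (w := nred m n) in *.
  clearbody g u w. rewrite Em, En, <- Z.mul_assoc, Z.mul_divide_cancel_l by lia.
  split; [intros Hd; now apply Z.gauss with w | now apply Z.divide_mul_r].
Qed.

Lemma not_divides_gcd_mred_pow k :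
  Z.abs m < Z.abs n -> 0 <= k -> ~ (n | Z.gcd m n * mred m n ^ k).
Proof.
  intros Hlt Hk Hd. pose proof gcd_pos.
  rewrite n_eq_gcd_nred in Hd at 1. apply Z.mul_divide_cancel_l in Hd; [|lia].
  assert (Hw : (nred m n | 1)).
  { revert Hd. pattern k. apply natlike_ind; [now rewrite Z.pow_0_r | | exact Hk].
    clear k Hk. intros k Hk IH Hd. rewrite Z.pow_succ_r in Hd by exact Hk.
    apply IH, Z.gauss with (mred m n); [exact Hd | apply nred_mred_coprime]. }
  assert (Hle : Z.gcd m n <= Z.abs m).
  { apply Z.divide_pos_le; [lia | apply Z.divide_abs_r, Z.gcd_divide_l]. }
  apply Z.divide_1_r in Hw. rewrite abs_n_eq in Hlt.
  destruct Hw as [Hw | Hw]; rewrite Hw in Hlt; cbn in Hlt; lia.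
Qed.

End GcdParts.


Section AdjacentLines.
Context {m n : Z}.
Hypotheses (Hm : m <> 0) (Hn : n <> 0).
Local Notation "u ≡ v" := (bs_eq m n u v) (at level 70).
Local Notation on := (on_line m n).

Lemma on_a_line_A_T1_iff g s s' :
  on (g ++ A s ++ T 1) (g ++ A s' ++ T 1) false <-> (n | s - s').
Proof.
  rewrite on_a_line_A_T_iff. split.
  - intros [t Ht]. exact (britton_pos Hm Hn 1 _ t Z.lt_0_1 Ht).
  - intros [q ->]. exists (m * q).
    now rewrite Z.mul_comm, A_T1, app_assoc, (T_cancel' 1).
Qed.

Lemma on_a_line_A_Tinv1_iff g s s' :
  on (g ++ A s ++ T (-1)) (g ++ A s' ++ T (-1)) false <-> (m | s - s').
Proof.
  rewrite on_a_line_A_T_iff. split.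
  - intros [t Ht]. exact (britton_neg Hm Hn (-1) _ t ltac:(lia) Ht).
  - intros [q ->]. exists (n * q).
    now rewrite Z.mul_comm, A_Tinv1, app_assoc, (T_cancel 1).
Qed.

Lemma t_strips_branch g a b c :
  Z.abs m < Z.abs n -> a < b < c ->
  exists y, on y (g ++ T a) false /\ on (y ++ T (b - a)) (g ++ T b) false /\
    forall s, ~ on (y ++ T s) (g ++ T c) false.
Proof.
  intros Hlt Habc.
  (* With m = d u and n = d w, y = g t^b a^(d u^(b-a)) t^(a-b) = g t^a a^(d w^(b-a)); reaching
     the a-line of g t^c from y would require n | d u^(b-a). *)
  set (i := Z.gcd m n * mred m n ^ (b - a) * 1).
  pose proof (conj_T_pow (Z.gcd m n) (mred m n) (nred m n) (b - a) 1
    (m_eq_gcd_mred m n Hm Hn) (n_eq_gcd_nred m n Hm Hn) ltac:(lia)) as Hconj.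
  fold i in Hconj. set (y := g ++ T b ++ A i ++ T (- (b - a))).
  assert (Hy : y ≡ g ++ T a ++ A (Z.gcd m n * nred m n ^ (b - a) * 1)).
  { unfold y. replace b with (a + (b - a)) at 1 by ring.
    now rewrite <- T_add, <- Hconj, <- !app_assoc. }
  exists y. split; [|split].
  - rewrite Hy. exists (Z.gcd m n * nred m n ^ (b - a) * 1). now rewrite app_assoc.
  - exists i. unfold y. now rewrite <- !app_assoc, T_cancel', app_nil_r.
  - intros s Hs.
    assert (s = c - a) as ->.
    { apply t_exp_on_a_line in Hs. unfold y in Hs. rewrite !t_exp_app in Hs.
      cbn in Hs. lia. }
    assert (Hyc : y ++ T (c - a) ≡ (g ++ T b) ++ A i ++ T (c - b)).
    { unfold y. rewrite <- !app_assoc, T_add.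
      now replace (- (b - a) + (c - a)) with (c - b) by ring. }
    rewrite Hyc, (app_T_split g b c) in Hs.
    apply on_a_line_T_iff in Hs as [t Ht].
    apply (britton_pos Hm Hn) in Ht; [|lia].
    unfold i in Ht. rewrite Z.mul_1_r in Ht.
    exact (not_divides_gcd_mred_pow m n Hm Hn (b - a) Hlt ltac:(lia) Ht).
Qed.

End AdjacentLines.

Definition ascends (s : Z -> Z) (k : Z) : Prop := s k < s (k + 1).

Definition no_peak (s : Z -> Z) : Prop :=
  forall i l j, i < l < j -> s l < s i \/ s l < s j.

Section NoPeak.
Variable s : Z -> Z.
Hypothesis s_inj : forall i j, s i = s j -> i = j.
Hypothesis s_no_peak : no_peak s.

Lemma ascends_or_descends k : ascends s k \/ s (k + 1) < s k.
Proof.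
  unfold ascends. destruct (Z.lt_trichotomy (s k) (s (k + 1))) as [|[E|]]; auto.
  apply s_inj in E. lia.
Qed.

Lemma ascends_succ k : ascends s k -> ascends s (k + 1).
Proof.
  intros H. destruct (ascends_or_descends (k + 1)) as [|H2]; [assumption|exfalso].
  unfold ascends in H.
  destruct (s_no_peak k (k + 1) (k + 1 + 1)) as [|]; lia.
Qed.

Lemma ascends_grow k x : ascends s k -> k <= x -> ascends s x /\ s k + (x - k) <= s x.
Proof.
  intros Hk Hx. replace x with (k + Z.of_nat (Z.to_nat (x - k))) by lia.
  induction (Z.to_nat (x - k)) as [|d [IH1 IH2]].
  - cbn [Z.of_nat]. rewrite Z.add_0_r. split; [assumption | lia].
  - rewrite Nat2Z.inj_succ, <- Z.add_1_r, Z.add_assoc. split; [now apply ascends_succ|].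
    unfold ascends in IH1. lia.
Qed.

End NoPeak.

Lemma no_peak_reflect s : no_peak s -> no_peak (fun k => s (- k)).
Proof.
  intros H i l j Hl. cbn. destruct (H (- j) (- l) (- i)); [lia | now right | now left].
Qed.

Lemma injective_reflect (s : Z -> Z) :
  (forall i j, s i = s j -> i = j) -> forall i j, s (- i) = s (- j) -> i = j.
Proof. intros Hinj i j E. apply Hinj in E. lia. Qed.

Lemma ascends_reflect s k :
  (forall i j, s i = s j -> i = j) ->
  ascends (fun k => s (- k)) k <-> ~ ascends s (- k - 1).
Proof.
  intros Hinj. unfold ascends.
  replace (- (k + 1)) with (- k - 1) by ring. replace (- k - 1 + 1) with (- k) by ring.
  split; [lia|]. intros H.
  destruct (Z.lt_trichotomy (s (- k)) (s (- k - 1))) as [|[E|]]; [assumption | | lia].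
  apply Hinj in E. lia.
Qed.

Lemma exists_valley s x y :
  x < y -> ~ ascends s x -> ascends s y -> exists k, ~ ascends s (k - 1) /\ ascends s k.
Proof.
  intros Hxy. assert (Hy : y = x + 1 + Z.of_nat (Z.to_nat (y - x - 1))) by lia.
  revert Hy. generalize (Z.to_nat (y - x - 1)) as d. intros d ->. clear Hxy.
  revert x. induction d as [|d IH]; intros x Hx Hy.
  - exists (x + 1). cbn [Z.of_nat] in Hy. rewrite Z.add_0_r in Hy.
    now replace (x + 1 - 1) with x by ring.
  - destruct (Z_lt_le_dec (s (x + 1)) (s (x + 1 + 1))) as [H1|H1].
    + exists (x + 1). now replace (x + 1 - 1) with x by ring.
    + apply (IH (x + 1)); [unfold ascends; lia|].
      now replace (x + 1 + 1 + Z.of_nat d) with (x + 1 + Z.of_nat (S d)) by lia.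
Qed.

Section NoPeakBijection.
Variable s : Z -> Z.
Hypothesis s_inj : forall i j, s i = s j -> i = j.
Hypothesis s_surj : forall v, exists k, s k = v.
Hypothesis s_no_peak : no_peak s.

Lemma valley_absurd k : ~ ascends s (k - 1) -> ascends s k -> False.
Proof.
  intros Hdown Hup.
  assert (Hmin : forall x, s k <= s x).
  { intros x. destruct (Z_le_gt_dec k x) as [Hx|Hx].
    - pose proof (ascends_grow s s_inj s_no_peak k x Hup Hx). lia.
    - assert (Hr : ascends (fun k => s (- k)) (- k)).
      { apply ascends_reflect; [exact s_inj|]. now replace (- - k - 1) with (k - 1) by ring. }
      destruct (ascends_grow (fun k => s (- k)) (injective_reflect s s_inj)
        (no_peak_reflect s s_no_peak) (- k) (- x) Hr ltac:(lia)) as [_ H].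
      cbn in H. rewrite !Z.opp_involutive in H. lia. }
  destruct (s_surj (s k - 1)) as [x Hx]. specialize (Hmin x). lia.
Qed.

Lemma ascends_everywhere_or_nowhere :
  (forall k, ascends s k) \/ (forall k, ~ ascends s k).
Proof.
  destruct (Z_lt_le_dec (s 0) (s (0 + 1))) as [H0|H0]; [left|right]; intros k.
  - destruct (Z_lt_le_dec (s k) (s (k + 1))) as [|Hk]; [assumption|exfalso].
    destruct (Z_le_gt_dec 0 k) as [Hk0|Hk0].
    + destruct (ascends_grow s s_inj s_no_peak 0 k H0 Hk0) as [Hup _].
      unfold ascends in Hup. lia.
    + destruct (exists_valley s k 0) as (v & Hv1 & Hv2);
        [lia | unfold ascends; lia | exact H0 |].
      exact (valley_absurd v Hv1 Hv2).
  - intros Hk. destruct (Z_le_gt_dec k 0) as [Hk0|Hk0].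
    + destruct (ascends_grow s s_inj s_no_peak k 0 Hk Hk0) as [Hup _].
      unfold ascends in Hup. lia.
    + destruct (exists_valley s 0 k) as (v & Hv1 & Hv2);
        [lia | unfold ascends; lia | exact Hk |].
      exact (valley_absurd v Hv1 Hv2).
Qed.

Lemma ascending_translation : (forall k, ascends s k) -> forall k, s k = s 0 + k.
Proof.
  intros Hup.
  assert (Hsucc : forall k, s (k + 1) = s k + 1).
  { intros k. destruct (s_surj (s k + 1)) as [x Hx].
    destruct (Z_le_gt_dec x k) as [Hxk|Hxk].
    - pose proof (ascends_grow s s_inj s_no_peak x k (Hup x) Hxk). lia.
    - pose proof (ascends_grow s s_inj s_no_peak (k + 1) x (Hup (k + 1)) ltac:(lia)).
      specialize (Hup k). unfold ascends in Hup. lia. }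
  intros k. induction k as [|k IH|k IH] using Z.peano_ind.
  - ring.
  - rewrite <- Z.add_1_r, Hsucc, IH. ring.
  - specialize (Hsucc (Z.pred k)). rewrite Z.add_1_r, Z.succ_pred in Hsucc. lia.
Qed.

End NoPeakBijection.

Lemma no_peak_bijection_affine s :
  (forall i j, s i = s j -> i = j) -> (forall v, exists k, s k = v) -> no_peak s ->
  (forall k, s k = s 0 + k) \/ (forall k, s k = s 0 - k).
Proof.
  intros Hinj Hsurj Hnp.
  destruct (ascends_everywhere_or_nowhere s Hinj Hsurj Hnp) as [Hup|Hdown]; [left|right].
  - exact (ascending_translation s Hinj Hsurj Hnp Hup).
  - set (r := fun k => s (- k)).
    assert (Hr : forall k, r k = r 0 + k).
    { apply ascending_translation.
      - exact (injective_reflect s Hinj).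
      - intros v. destruct (Hsurj v) as [k Hk]. exists (- k).
        unfold r. now rewrite Z.opp_involutive.
      - exact (no_peak_reflect s Hnp).
      - intros k. apply ascends_reflect; [exact Hinj | apply Hdown]. }
    intros k. specialize (Hr (- k)). unfold r in Hr. rewrite Z.opp_involutive in Hr.
    cbn in Hr. lia.
Qed.

Definition Z_range (N : Z) : list Z := map Z.of_nat (seq 0 (Z.to_nat N)).

Lemma in_Z_range N j : In j (Z_range N) <-> 0 <= j < N.
Proof.
  unfold Z_range. rewrite in_map_iff. split.
  - intros (k & <- & Hk). apply in_seq in Hk. lia.
  - intros Hj. exists (Z.to_nat j). rewrite in_seq. lia.
Qed.

Lemma pigeonhole_Z (N M : Z) (R : Z -> Z -> Prop) :
  0 <= M ->
  (forall j, 0 <= j < N -> exists r, 0 <= r < M /\ R j r) ->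
  (forall j j' r, 0 <= j < N -> 0 <= j' < N -> R j r -> R j' r -> j = j') ->
  N <= M.
Proof.
  intros HM Hex Hinj.
  assert (Hf : forall j, exists r, 0 <= j < N -> 0 <= r < M /\ R j r).
  { intros j. destruct (Z_le_dec 0 j), (Z_lt_dec j N);
      [destruct (Hex j) as [r Hr]; [lia | now exists r] | exists 0; lia ..]. }
  set (f j := proj1_sig (constructive_indefinite_description _ (Hf j))).
  assert (Hfj : forall j, 0 <= j < N -> 0 <= f j < M /\ R j (f j)).
  { intros j. exact (proj2_sig (constructive_indefinite_description _ (Hf j))). }
  assert (Hlen : (length (map f (Z_range N)) <= length (Z_range M))%nat).
  { apply NoDup_incl_length.
    - apply NoDup_map_NoDup_ForallPairs; [|apply Injective_map_NoDup].
      + intros j j' Hj Hj' E. apply in_Z_range in Hj, Hj'.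
        apply (Hinj j j' (f j)); [assumption | assumption | apply Hfj | rewrite E; apply Hfj];
          assumption.
      + intros a b E. now apply Nat2Z.inj.
      + apply seq_NoDup.
    - intros r Hr. apply in_map_iff in Hr as (j & <- & Hj). apply in_Z_range in Hj.
      apply in_Z_range, Hfj, Hj. }
  unfold Z_range in Hlen. rewrite !length_map, !length_seq in Hlen. lia.
Qed.

Definition line_corr (m n m' n' : Z) (phi : word -> word) (swap : bool) : Prop :=
  forall x y b,
    on_line m n y x b <-> on_line m' n' (phi y) (phi x) (if swap then negb b else b).

Section Bijection.
Context {m n m' n' : Z} {phi : word -> word}.
Hypothesis phi_bij : is_bijection m n m' n' phi.
Local Notation "u ≡ v" := (bs_eq m n u v) (at level 70).
Local Notation "u ≡' v" := (bs_eq m' n' u v) (at level 70).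
Local Notation on := (on_line m n).
Local Notation on' := (on_line m' n').

Lemma phi_bs_eq u v : u ≡ v -> phi u ≡' phi v.
Proof. apply phi_bij. Qed.

Lemma phi_reflect u v : phi u ≡' phi v -> u ≡ v.
Proof. apply phi_bij. Qed.

Lemma phi_surj w : exists u, phi u ≡' w.
Proof. apply phi_bij. Qed.

Definition phi_inv (w : word) : word :=
  proj1_sig (constructive_indefinite_description _ (phi_surj w)).

Lemma phi_phi_inv w : phi (phi_inv w) ≡' w.
Proof. exact (proj2_sig (constructive_indefinite_description _ (phi_surj w))). Qed.

Lemma phi_inv_phi u : phi_inv (phi u) ≡ u.
Proof. apply phi_reflect, phi_phi_inv. Qed.

Lemma phi_inv_bijection : is_bijection m' n' m n phi_inv.
Proof.
  split; [|split].
  - intros w w' Hw. apply phi_reflect. now rewrite !phi_phi_inv.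
  - intros w w' Hw. apply phi_bs_eq in Hw. now rewrite !phi_phi_inv in Hw.
  - intros u. exists (phi u). apply phi_inv_phi.
Qed.

Lemma phi_inv_line_corr swap :
  line_corr m n m' n' phi swap -> line_corr m' n' m n phi_inv swap.
Proof.
  intros Hcorr x y b. rewrite (Hcorr (phi_inv x) (phi_inv y)), !phi_phi_inv.
  now destruct swap, b.
Qed.

Section LineKinds.
Hypotheses (Hm : m <> 0) (Hn : n <> 0) (Hm' : m' <> 0) (Hn' : n' <> 0).
Hypothesis phi_lp : line_preserving m n m' n' phi.

Definition maps_line_to (g : word) (b c : bool) : Prop :=
  exists h, forall x, on x g b <-> on' (phi x) h c.

Lemma maps_line_to_exists g b : exists c, maps_line_to g b c.
Proof.
  destruct (phi_lp g b) as (h & c & Honto & Hback). exists c, h. intros x. split.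
  - intros [k Hk]. destruct (Honto k) as [l Hl]. exists l. now rewrite (phi_bs_eq _ _ Hk).
  - intros [l Hl]. destruct (Hback l) as [k Hk]. exists k. apply phi_reflect.
    now rewrite Hl, Hk.
Qed.

Lemma maps_line_to_base g b c x :
  maps_line_to g b c -> on x g b <-> on' (phi x) (phi g) c.
Proof.
  intros [h H]. rewrite H. assert (Hg : on' (phi g) h c) by apply H, on_line_refl.
  split; intros Hx.
  - exact (on_line_shared _ _ _ _ Hg Hx).
  - exact (on_line_trans _ _ _ _ Hg Hx).
Qed.

Lemma maps_line_to_move g b c x : maps_line_to g b c -> on x g b -> maps_line_to x b c.
Proof.
  intros [h H] Hx. exists h. intros y. rewrite <- H. split; intros Hy.
  - exact (on_line_trans _ _ _ _ Hx Hy).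
  - exact (on_line_shared _ _ _ _ Hx Hy).
Qed.

Lemma maps_line_to_unique g b c1 c2 : maps_line_to g b c1 -> maps_line_to g b c2 -> c1 = c2.
Proof.
  intros H1 H2. apply (line_kind_unique Hm' Hn' (phi g) c1 (phi g) c2). intros q.
  destruct (phi_surj q) as [u <-].
  now rewrite <- (maps_line_to_base _ _ _ _ H1), (maps_line_to_base _ _ _ _ H2).
Qed.

Lemma maps_line_to_kinds g c :
  maps_line_to g false c -> maps_line_to g true (negb c).
Proof.
  intros Ha. destruct (maps_line_to_exists g true) as [c' Ht].
  assert (Hc : c' <> c).
  { intros ->. enough (1 = 0) by lia. apply (A_on_t_line Hm Hn g 1).
    apply (maps_line_to_base _ _ _ _ Ht), (maps_line_to_base _ _ _ _ Ha), on_line_pt. }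
  now replace (negb c) with c' by (destruct c, c'; cbn; congruence).
Qed.

Lemma line_corr_exists : exists swap, line_corr m n m' n' phi swap.
Proof.
  destruct (maps_line_to_exists [] false) as [c Hc].
  assert (Hall : forall w, maps_line_to w false c).
  { intros w. induction w as [|[[|] k] w IH] using rev_ind; [exact Hc| |].
    - pose proof (maps_line_to_move _ _ _ _ (maps_line_to_kinds _ _ IH) (on_line_pt w true k))
        as Ht.
      destruct (maps_line_to_exists (w ++ gen_pow true k) false) as [c' Ha].
      pose proof (maps_line_to_unique _ _ _ _ Ht (maps_line_to_kinds _ _ Ha)) as E.
      now replace c with c' by (destruct c, c'; cbn in E; congruence).
    - exact (maps_line_to_move _ _ _ _ IH (on_line_pt w false k)). }
  exists c. intros x y [|].
  - rewrite (maps_line_to_base _ _ _ y (maps_line_to_kinds _ _ (Hall x))). now destruct c.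
  - rewrite (maps_line_to_base _ _ _ y (Hall x)). now destruct c.
Qed.

End LineKinds.

End Bijection.

Section Swapped.
Context {m n m' n' : Z} {phi : word -> word}.
Hypotheses (Hm : m <> 0) (Hn : n <> 0) (Hm' : m' <> 0) (Hn' : n' <> 0).
Hypothesis phi_bij : is_bijection m n m' n' phi.
Hypothesis phi_swap : line_corr m n m' n' phi true.
Local Notation on := (on_line m n).
Local Notation on' := (on_line m' n').

Lemma swap_on_line x y b : on y x b <-> on' (phi y) (phi x) (negb b).
Proof. exact (phi_swap x y b). Qed.

Lemma line_swap_target_unit : Z.abs m' < Z.abs n' -> Z.abs m' < 2.
Proof.
  intros Hlt'. apply Z.nle_gt. intros H2.
  set (z := phi []).
  destruct (phi_surj phi_bij (z ++ A 1)) as [y Hy].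
  assert (Hyt : on y [] true) by (apply (swap_on_line _ _ true); rewrite Hy; apply on_line_pt).
  destruct Hyt as [k Hk].
  assert (Hk0 : k <> 0).
  { intros ->. apply (letter_nontrivial Hm' Hn' false), (cancel_l z).
    rewrite app_nil_r, <- Hy. apply (phi_bs_eq phi_bij). now rewrite Hk, T0. }
  destruct (t_lines_reconverge Hm Hn [] k Hk0) as (c & Hc & HQ).
  assert (P1 : on' (phi (A c)) z true) by (apply (swap_on_line _ _ false); now exists c).
  assert (P2 : on' (phi (A c ++ T k)) (z ++ A 1) true).
  { rewrite <- Hy. apply (swap_on_line _ _ false). now rewrite Hk. }
  assert (P3 : on' (phi (A c ++ T k)) (phi (A c)) false)
    by apply (swap_on_line _ _ true), on_line_pt.
  pose proof (adjacent_t_lines_meet_at_base Hm' Hn' _ _ _ H2 ltac:(lia) P1 P2 P3) as H4.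
  apply (swap_on_line _ _ true) in H4. exact (Hc (A_on_t_line Hm Hn [] c H4)).
Qed.

End Swapped.

Lemma no_line_swap m n m' n' phi :
  m <> 0 -> n <> 0 -> m' <> 0 -> n' <> 0 ->
  Z.abs m < Z.abs n -> Z.abs m' < Z.abs n' ->
  is_bijection m n m' n' phi -> ~ line_corr m n m' n' phi true.
Proof.
  intros Hm Hn Hm' Hn' Hlt Hlt' Hbij Hswap.
  pose proof (line_swap_target_unit Hm Hn Hm' Hn' Hbij Hswap Hlt') as Hm'1.
  pose proof (line_swap_target_unit Hm' Hn' Hm Hn (phi_inv_bijection Hbij)
    (phi_inv_line_corr Hbij true Hswap) Hlt) as Hm1.
  assert (Hmm : m * m = 1) by (destruct (Z.abs_spec m); nia).
  destruct (phi_surj Hbij []) as [u1 Hu1].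
  destruct (phi_surj Hbij (T (-1) ++ A 1 ++ T 1)) as [u2 Hu2].
  destruct (t_lines_a_joined (m := m) (n := n) u1 u2 Hmm) as (x & y & Hx & Hy & Hxy).
  apply (a_lines_not_t_joined Hm' Hn' (phi x) (phi y));
    [lia | rewrite <- Hu1 | rewrite <- Hu2 |].
  - exact (proj1 (Hswap u1 x true) Hx).
  - exact (proj1 (Hswap u2 y true) Hy).
  - exact (proj1 (Hswap x y false) Hxy).
Qed.

Section Aligned.
Context {m n m' n' : Z} {phi : word -> word}.
Hypotheses (Hm : m <> 0) (Hn : n <> 0) (Hm' : m' <> 0) (Hn' : n' <> 0).
Hypothesis phi_bij : is_bijection m n m' n' phi.
Hypothesis phi_corr : line_corr m n m' n' phi false.
Local Notation "u ≡' v" := (bs_eq m' n' u v) (at level 70).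
Local Notation on := (on_line m n).
Local Notation on' := (on_line m' n').

#[local] Instance phi_proper : Proper (bs_eq m n ==> bs_eq m' n') phi := phi_bs_eq phi_bij.

Lemma phi_on_line x y b : on y x b <-> on' (phi y) (phi x) b.
Proof. exact (phi_corr x y b). Qed.

Lemma phi_pull x w b : on' w (phi x) b -> exists u, phi u ≡' w /\ on u x b.
Proof.
  intros Hw. destruct (phi_surj phi_bij w) as [u Hu]. exists u. split; [exact Hu|].
  apply phi_on_line. now rewrite Hu.
Qed.

Lemma tcoord_exists g k : exists l, phi (g ++ T k) ≡' phi g ++ T l.
Proof. exact (proj1 (phi_on_line _ _ _) (on_line_pt g true k)). Qed.

Definition tcoord (g : word) (k : Z) : Z :=
  proj1_sig (constructive_indefinite_description _ (tcoord_exists g k)).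

Lemma tcoord_spec g k : phi (g ++ T k) ≡' phi g ++ T (tcoord g k).
Proof. exact (proj2_sig (constructive_indefinite_description _ (tcoord_exists g k))). Qed.

Lemma tcoord_unique g k l : phi (g ++ T k) ≡' phi g ++ T l -> tcoord g k = l.
Proof.
  intros H. apply (T_inj (m := m') (n := n')), (cancel_l (phi g)).
  now rewrite <- tcoord_spec.
Qed.

Lemma tcoord_inj g i j : tcoord g i = tcoord g j -> i = j.
Proof.
  intros E. apply (T_inj (m := m) (n := n)), (cancel_l g), (phi_reflect phi_bij).
  now rewrite !tcoord_spec, E.
Qed.

Lemma tcoord_surj g l : exists k, tcoord g k = l.
Proof.
  destruct (phi_pull g (phi g ++ T l) true (on_line_pt _ _ _)) as (u & Hu & [k Hk]).
  exists k. apply tcoord_unique. now rewrite <- Hk.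
Qed.

Lemma tcoord0 g : tcoord g 0 = 0.
Proof.
  apply tcoord_unique. transitivity (phi g).
  - apply phi_proper. now rewrite T0, app_nil_r.
  - now rewrite T0, app_nil_r.
Qed.

Section TargetHypothesis.
Hypothesis Hlt' : Z.abs m' < Z.abs n'.

Lemma tcoord_no_valley g i l j :
  i < l < j \/ j < l < i -> tcoord g i < tcoord g j < tcoord g l -> False.
Proof.
  intros Hl Hord.
  destruct (t_strips_branch Hm' Hn' (phi g) _ _ _ Hlt' Hord) as (y' & Hy'i & Hy'j & Hy'l).
  destruct (phi_surj phi_bij y') as [y Hy].
  assert (Hyi : on y (g ++ T i) false).
  { apply phi_on_line. now rewrite Hy, tcoord_spec. }
  destruct (phi_pull y (y' ++ T (tcoord g j - tcoord g i)) true) as (u & Hu & [d Hd]).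
  { rewrite Hy. apply on_line_pt. }
  assert (Hyj : on (y ++ T d) (g ++ T j) false).
  { apply phi_on_line. now rewrite <- Hd, Hu, tcoord_spec. }
  assert (d = j - i) as ->.
  { apply t_exp_on_a_line in Hyi, Hyj. rewrite !t_exp_T in Hyi. rewrite !t_exp_T in Hyj. lia. }
  pose proof (a_line_between Hm Hn g y i l j Hl Hyi Hyj) as Hyl.
  apply phi_on_line in Hyl. rewrite (tcoord_spec g l) in Hyl.
  destruct (proj1 (phi_on_line y (y ++ T (l - i)) true) (on_line_pt _ _ _)) as [s Hs].
  apply (Hy'l s). now rewrite <- Hy, <- Hs.
Qed.

Lemma tcoord_no_peak g : no_peak (tcoord g).
Proof.
  intros i l j Hl.
  destruct (Z_lt_le_dec (tcoord g l) (tcoord g i)) as [|Hi]; [now left|].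
  destruct (Z_lt_le_dec (tcoord g l) (tcoord g j)) as [|Hj]; [now right|]. exfalso.
  assert (tcoord g l <> tcoord g i) by (intros E; apply tcoord_inj in E; lia).
  assert (tcoord g l <> tcoord g j) by (intros E; apply tcoord_inj in E; lia).
  destruct (Z_lt_ge_dec (tcoord g i) (tcoord g j)).
  - apply (tcoord_no_valley g i l j); [now left | lia].
  - assert (tcoord g i <> tcoord g j) by (intros E; apply tcoord_inj in E; lia).
    apply (tcoord_no_valley g j l i); [now right | lia].
Qed.

Lemma tcoord_linear g : (forall k, tcoord g k = k) \/ (forall k, tcoord g k = - k).
Proof.
  destruct (no_peak_bijection_affine (tcoord g) (tcoord_inj g) (tcoord_surj g)
    (tcoord_no_peak g)) as [H|H]; [left|right]; intros k; rewrite H, tcoord0; ring.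
Qed.

Lemma tcoord_transfer g y e :
  on y g false -> on (y ++ T e) (g ++ T e) false -> tcoord y e = tcoord g e.
Proof.
  intros H1 H2. apply phi_on_line, t_exp_on_a_line in H1.
  apply phi_on_line, t_exp_on_a_line in H2.
  rewrite (t_exp_bs_eq _ _ (tcoord_spec y e)), (t_exp_bs_eq _ _ (tcoord_spec g e)) in H2.
  rewrite !t_exp_T in H2. lia.
Qed.

Lemma tcoord_reversed_of g e :
  e <> 0 -> tcoord g e = - e -> forall k, tcoord g k = - k.
Proof.
  intros He H. destruct (tcoord_linear g) as [H'|H']; [rewrite H' in H; lia | exact H'].
Qed.

Lemma reversed_adjacent_image g j :
  (forall k, tcoord g k = - k) ->
  exists r, 0 <= r < Z.abs (mred m' n') /\
    on' (phi (g ++ A (m * j) ++ T 1)) (phi g ++ A (n' * r) ++ T (-1)) false.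
Proof.
  intros Hrev. rewrite app_assoc. set (y := g ++ A (m * j)).
  assert (Hy : on y g false) by now exists (m * j).
  assert (Hy1 : on (y ++ T (-1)) (g ++ T (-1)) false).
  { exists (n * j). unfold y. now rewrite <- app_assoc, A_Tinv1, app_assoc. }
  assert (Hyrev : forall k, tcoord y k = - k).
  { apply (tcoord_reversed_of y (-1)); [lia|].
    now rewrite (tcoord_transfer g y (-1) Hy Hy1), Hrev. }
  apply phi_on_line in Hy as [i Hi]. apply phi_on_line in Hy1.
  rewrite !tcoord_spec, Hyrev, Hrev, Hi, <- app_assoc in Hy1. cbn [Z.opp] in Hy1.
  destruct (proj1 (on_a_line_T_iff _ _ _) Hy1) as [s Hs].
  destruct (britton_pos Hm' Hn' 1 i s Z.lt_0_1 Hs) as [c ->].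
  pose proof (mred_neq0 m' n' Hm' Hn') as Hu.
  exists (c mod Z.abs (mred m' n')). split; [apply Z.mod_pos_bound; lia|].
  rewrite tcoord_spec, Hyrev, Hi, <- app_assoc. cbn [Z.opp].
  apply (on_a_line_A_Tinv1_iff Hm' Hn').
  replace (c * n' - n' * (c mod Z.abs (mred m' n'))) with (n' * (c - c mod Z.abs (mred m' n')))
    by ring.
  now apply (divide_n_mul_iff m' n' Hm' Hn'), divide_sub_mod_abs.
Qed.

Lemma reversed_tline_bound g :
  (forall k, tcoord g k = - k) -> Z.abs (nred m n) <= Z.abs (mred m' n').
Proof.
  intros Hrev.
  apply (pigeonhole_Z _ _ (fun j r =>
    on' (phi (g ++ A (m * j) ++ T 1)) (phi g ++ A (n' * r) ++ T (-1)) false)); [lia | |].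
  - intros j _. exact (reversed_adjacent_image g j Hrev).
  - intros j j' r Hj Hj' H1 H2.
    pose proof (on_line_shared _ _ _ _ H1 H2) as H. apply phi_on_line in H.
    apply (on_a_line_A_T1_iff Hm Hn) in H. rewrite <- Z.mul_sub_distr_l in H.
    apply (divide_m_mul_iff m n Hm Hn), divide_small_eq0 in H; lia.
Qed.

End TargetHypothesis.

Lemma adjacent_lines_count_le e N N' :
  N' <> 0 ->
  (forall g s s', on (g ++ A s ++ T e) (g ++ A s' ++ T e) false <-> (N | s - s')) ->
  (forall g s s', on' (g ++ A s ++ T e) (g ++ A s' ++ T e) false <-> (N' | s - s')) ->
  (forall g, tcoord g e = e) -> Z.abs N <= Z.abs N'.
Proof.
  intros HN' Hsrc Htgt Hid.
  apply (pigeonhole_Z _ _ (fun i r => on' (phi (A i ++ T e)) (phi [] ++ A r ++ T e) false));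
    [lia | |].
  - intros i _.
    destruct (proj1 (phi_on_line [] (A i) false) (on_line_pt [] false i)) as [s Hs].
    exists (s mod Z.abs N'). split; [apply Z.mod_pos_bound; lia|].
    rewrite tcoord_spec, Hid, Hs, <- app_assoc.
    now apply Htgt, divide_sub_mod_abs.
  - intros i i' r Hi Hi' H1 H2.
    pose proof (on_line_shared _ _ _ _ H1 H2) as H.
    apply phi_on_line, (Hsrc []), divide_small_eq0 in H; lia.
Qed.

End Aligned.

Section AlignedBijection.
Context {m n m' n' : Z} {phi : word -> word}.
Hypotheses (Hm : m <> 0) (Hn : n <> 0) (Hm' : m' <> 0) (Hn' : n' <> 0).
Hypotheses (Hlt : Z.abs m < Z.abs n) (Hlt' : Z.abs m' < Z.abs n').
Hypothesis phi_bij : is_bijection m n m' n' phi.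
Hypothesis phi_corr : line_corr m n m' n' phi false.
Let inv_corr := phi_inv_line_corr phi_bij false phi_corr.

Lemma inverse_reversed g :
  (forall k, tcoord phi_corr g k = - k) -> forall k, tcoord inv_corr (phi g) k = - k.
Proof.
  intros Hrev k. apply tcoord_unique.
  pose proof (phi_inv_bijection phi_bij) as [inv_wd _].
  transitivity (g ++ T (- k)).
  - transitivity (phi_inv phi_bij (phi (g ++ T (- k)))); [|apply phi_inv_phi].
    apply inv_wd. now rewrite (tcoord_spec phi_corr), Hrev, Z.opp_involutive.
  - now rewrite (phi_inv_phi phi_bij g).
Qed.

Lemma tcoord_id g k : tcoord phi_corr g k = k.
Proof.
  destruct (tcoord_linear Hm Hn Hm' Hn' phi_bij phi_corr Hlt' g) as [H|Hrev];
    [apply H | exfalso].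
  pose proof (reversed_tline_bound Hm Hn Hm' Hn' phi_bij phi_corr Hlt' g Hrev).
  pose proof (reversed_tline_bound Hm' Hn' Hm Hn (phi_inv_bijection phi_bij) inv_corr Hlt
    (phi g) (inverse_reversed g Hrev)).
  pose proof (abs_mred_lt_nred m n Hm Hn Hlt).
  pose proof (abs_mred_lt_nred m' n' Hm' Hn' Hlt').
  lia.
Qed.

End AlignedBijection.

Lemma aligned_maps_lines m n m' n' phi (g : word) (b : bool) :
  is_bijection m n m' n' phi -> line_corr m n m' n' phi false ->
  maps_line_onto m' n' phi g b (phi g) b.
Proof.
  intros Hbij Hcorr. split.
  - intros k. exact (proj1 (Hcorr g (line_pt g b k) b) (on_line_pt g b k)).
  - intros l.
    destruct (phi_pull Hbij Hcorr g (line_pt (phi g) b l) b (on_line_pt _ _ _))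
      as (u & Hu & [k Hk]).
    exists k. transitivity (phi u); [|exact Hu].
    symmetry. apply (phi_bs_eq Hbij). exact Hk.
Qed.

Section Conclusions.
Context {m n m' n' : Z} {phi : word -> word}.
Hypotheses (Hm : m <> 0) (Hn : n <> 0) (Hm' : m' <> 0) (Hn' : n' <> 0).
Hypotheses (Hlt : Z.abs m < Z.abs n) (Hlt' : Z.abs m' < Z.abs n').
Hypothesis phi_bij : is_bijection m n m' n' phi.
Hypothesis phi_corr : line_corr m n m' n' phi false.

Lemma aligned_t_lines_fixed g k :
  bs_eq m' n' (phi (line_pt g gen_t k)) (line_pt (phi g) gen_t k).
Proof.
  pose proof (tcoord_spec phi_corr g k) as H.
  now rewrite (tcoord_id Hm Hn Hm' Hn' Hlt Hlt' phi_bij phi_corr) in H.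
Qed.

Lemma aligned_abs_eq : Z.abs m = Z.abs m' /\ Z.abs n = Z.abs n'.
Proof.
  pose proof (tcoord_id Hm Hn Hm' Hn' Hlt Hlt' phi_bij phi_corr) as Hid.
  pose proof (tcoord_id Hm' Hn' Hm Hn Hlt' Hlt (phi_inv_bijection phi_bij)
    (phi_inv_line_corr phi_bij false phi_corr)) as Hid'.
  pose proof (adjacent_lines_count_le phi_corr (-1) m m' Hm'
    (on_a_line_A_Tinv1_iff Hm Hn) (on_a_line_A_Tinv1_iff Hm' Hn') (fun g => Hid g (-1))).
  pose proof (adjacent_lines_count_le (phi_inv_line_corr phi_bij false phi_corr) (-1) m' m Hm
    (on_a_line_A_Tinv1_iff Hm' Hn') (on_a_line_A_Tinv1_iff Hm Hn) (fun g => Hid' g (-1))).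
  pose proof (adjacent_lines_count_le phi_corr 1 n n' Hn'
    (on_a_line_A_T1_iff Hm Hn) (on_a_line_A_T1_iff Hm' Hn') (fun g => Hid g 1)).
  pose proof (adjacent_lines_count_le (phi_inv_line_corr phi_bij false phi_corr) 1 n' n Hn
    (on_a_line_A_T1_iff Hm' Hn') (on_a_line_A_T1_iff Hm Hn) (fun g => Hid' g 1)).
  lia.
Qed.

End Conclusions.

Theorem proposition3p1 (m n m' n' : Z) (phi : word -> word) :
  m <> 0 -> n <> 0 -> m' <> 0 -> n' <> 0 ->
  Z.abs m < Z.abs n -> Z.abs m' < Z.abs n' ->
  is_bijection m n m' n' phi ->
  line_preserving m n m' n' phi ->
  (* a-lines onto a-lines, t-lines onto t-lines *)
  (forall (g : word) (b : bool), exists h : word, maps_line_onto m' n' phi g b h b) /\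
  (* order along t-lines is preserved *)
  (forall (g : word) (i j : Z), i < j ->
     exists (h : word) (p q : Z), p < q /\
       bs_eq m' n' (phi (line_pt g gen_t i)) (line_pt h gen_t p) /\
       bs_eq m' n' (phi (line_pt g gen_t j)) (line_pt h gen_t q)) /\
  Z.abs m = Z.abs m' /\ Z.abs n = Z.abs n'.
Proof.
  intros Hm Hn Hm' Hn' Hlt Hlt' Hbij Hlp.
  destruct (line_corr_exists Hbij Hm Hn Hm' Hn' Hlp) as [[|] Hcorr].
  { exfalso. exact (no_line_swap m n m' n' phi Hm Hn Hm' Hn' Hlt Hlt' Hbij Hcorr). }
  split; [|split].
  - intros g b. exists (phi g). exact (aligned_maps_lines m n m' n' phi g b Hbij Hcorr).
  - intros g i j Hij. exists (phi g), i, j.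
    split; [exact Hij|].
    split; apply (aligned_t_lines_fixed Hm Hn Hm' Hn' Hlt Hlt' Hbij Hcorr).
  - exact (aligned_abs_eq Hm Hn Hm' Hn' Hlt Hlt' Hbij Hcorr).
Qed.
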